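(* For all relational types $R,R'$, terms $t_1,t_2$ and environment $\gamma$: $t_1\,\llbracket R\Rightarrow R'\rrbracket_\gamma\,t_2$ holds iff for all $(x,x')\in\llbracket R\rrbracket_\gamma$, $t_1\,\llbracket R'\rrbracket_\gamma\,t_2$.
   Context: Terms are those of the pure untyped $\lambda$-calculus, up to $\alpha$-equivalence; $=_{\beta\eta}$ is $\beta\eta$-convertibility. Relational types: $R ::= X \mid R\to R' \mid \forall X.R \mid R^{\cup} \mid R\cdot R' \mid t$ (last form: promotion of a term). A relation on terms is $\beta\eta$-closed if closed under replacing either related term by a $\beta\eta$-equal one; $\mathcal{R}$ is the set of such relations; environments $\gamma$ map finitely many type variables to $\mathcal{R}$. Interpretation: $\llbracket X\rrbracket_\gamma=\gamma(X)$; $t\,\llbracket R\to R'\rrbracket_\gamma\,t'$ iff for all $a,a'$ with $a\,\llbracket R\rrbracket_\gamma\,a'$, $t\,a\,\llbracket R'\rrbracket_\gamma\,t'\,a'$; $\llbracket \forall X.R\rrbracket_\gamma=\bigcap_{r\in\mathcal{R}}\llbracket R\rrbracket_{\gamma[X\mapsto r]}$; $t\,\llbracket R^\cup\rrbracket_\gamma\,t'$ iff $t'\,\llbracket R\rrbracket_\gamma\,t$; $t\,\llbracket R\cdot R'\rrbracket_\gamma\,t'$ iff $\exists t''$, $t\,\llbracket R\rrbracket_\gamma\,t''$ and $t''\,\llbracket R'\rrbracket_\gamma\,t'$; $\llbracket \hat t\rrbracket_\gamma=\{(t,t')\mid \hat t\,t=_{\beta\eta}t'\}$. Let $K:=\lambda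 x.\lambda y.x$, $t\bullet R:=t\cdot R\cdot t^\cup$, and $R\Rightarrow R':=K\bullet(R\to R')$. *)

(* Pure untyped lambda-calculus with de Bruijn indices
   (so terms are quotiented by alpha-equivalence by construction). *)
From Stdlib Require Import Arith Relations.

Inductive term : Type :=
| Var : nat -> term
| App : term -> term -> term
| Lam : term -> term.

Fixpoint lift (k c : nat) (t : term) : term :=
  match t with
  | Var n => if n <? c then Var n else Var (n + k)
  | App a b => App (lift k c a) (lift k c b)
  | Lam a => Lam (lift k (S c) a)
  end.

Fixpoint subst (j : nat) (s : term) (t : term) : term :=
  match t with
  | Var n => if n =? j then s else if j <? n then Var (n - 1) else Var n
  | App a b => App (subst j s a) (subst j s b)
  | Lam a => Lam (subst (S j) (lift 1 0 s) a)
  end.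

Inductive step : term -> term -> Prop :=
| step_beta : forall a b, step (App (Lam a) b) (subst 0 b a)
| step_eta : forall a, step (Lam (App (lift 1 0 a) (Var 0))) a
| step_appl : forall a a' b, step a a' -> step (App a b) (App a' b)
| step_appr : forall a b b', step b b' -> step (App a b) (App a b')
| step_lam : forall a a', step a a' -> step (Lam a) (Lam a').

Definition beq : term -> term -> Prop := clos_refl_sym_trans term step.

Definition closed_rel (r : term -> term -> Prop) : Prop :=
  forall t1 t1' t2 t2', beq t1 t1' -> beq t2 t2' -> r t1 t2 -> r t1' t2'.

Definition crel : Type := { r : term -> term -> Prop | closed_rel r }.

Inductive rtype : Type :=
| RVar : nat -> rtype
| RArr : rtype -> rtype -> rtype
| RAll : nat -> rtype -> rtype
| RConv : rtype -> rtype
| RComp : rtype -> rtype -> rtype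
| RProm : term -> rtype.

Definition env : Type := nat -> crel.

Definition env_upd (g : env) (X : nat) (r : crel) : env :=
  fun Y => if Nat.eqb Y X then r else g Y.

Fixpoint interp (R : rtype) (g : env) : term -> term -> Prop :=
  match R with
  | RVar X => proj1_sig (g X)
  | RArr R1 R2 => fun t t' =>
      forall a a', interp R1 g a a' -> interp R2 g (App t a) (App t' a')
  | RAll X R1 => fun t t' => forall r : crel, interp R1 (env_upd g X r) t t'
  | RConv R1 => fun t t' => interp R1 g t' t
  | RComp R1 R2 => fun t t' => exists t'', interp R1 g t t'' /\ interp R2 g t'' t'
  | RProm u => fun t t' => beq (App u t) t'
  end.

Definition Kc : term := Lam (Lam (Var 1)).

Definition RBul (t : term) (R : rtype) : rtype :=
  RComp (RProm t) (RComp R (RConv (RProm t))).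

Definition RImp (R R' : rtype) : rtype := RBul Kc (RArr R R').

(* Because every interpretation is βη-closed, [u ⟦t • R⟧ v] holds exactly when
   [t u ⟦R⟧ t v]. For [t = K] the arrow condition on [K t1] and [K t2] no longer
   depends on the arguments, since [K t a] is βη-equal to [t]. *)
From Stdlib Require Import Arith Relations Lia.

Lemma beq_refl t : beq t t.
Proof. apply rst_refl. Qed.

Lemma beq_sym a b : beq a b -> beq b a.
Proof. apply rst_sym. Qed.

Lemma beq_trans a b c : beq a b -> beq b c -> beq a c.
Proof. apply rst_trans. Qed.

Lemma beq_step a b : step a b -> beq a b.
Proof. apply rst_step. Qed.

Lemma beq_map (f : term -> term) :
  (forall a b, step a b -> step (f a) (f b)) ->
  forall a b, beq a b -> beq (f a) (f b).
Proof.
  intros Hf a b Hab. induction Hab.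
  - apply beq_step, Hf; assumption.
  - apply beq_refl.
  - apply beq_sym; assumption.
  - eapply beq_trans; eassumption.
Qed.

Lemma beq_appl a a' b : beq a a' -> beq (App a b) (App a' b).
Proof. apply (beq_map (fun a => App a b)); intros; apply step_appl; assumption. Qed.

Lemma beq_appr a b b' : beq b b' -> beq (App a b) (App a b').
Proof. apply (beq_map (App a)); intros; apply step_appr; assumption. Qed.

Lemma interp_closed R g : closed_rel (interp R g).
Proof.
  revert g; induction R as [X | R1 IH1 R2 IH2 | X R1 IH | R1 IH | R1 IH1 R2 IH2 | u];
    intros g t1 t1' t2 t2' H1 H2 H; simpl in *.
  - exact (proj2_sig (g X) _ _ _ _ H1 H2 H).
  - intros a a' Ha. eapply IH2; [apply beq_appl .. | apply H]; eassumption.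
  - intros r. eapply IH; eauto.
  - eapply IH; eauto.
  - destruct H as [t'' [Ht1 Ht2]]. exists t''. split.
    + eapply IH1; [eassumption | apply beq_refl | eassumption].
    + eapply IH2; [apply beq_refl | eassumption | eassumption].
  - eapply beq_trans; [apply beq_appr, beq_sym; eassumption |].
    eapply beq_trans; eassumption.
Qed.

Lemma interp_RBul R t g u v :
  interp (RBul t R) g u v <-> interp R g (App t u) (App t v).
Proof.
  simpl. split.
  - intros [u' [Hu [v' [Huv Hv]]]].
    eapply interp_closed; [apply beq_sym, Hu | apply beq_sym, Hv | exact Huv].
  - intros H. exists (App t u). split; [apply beq_refl |].
    exists (App t v). split; [exact H | apply beq_refl].
Qed.

Lemma subst_lift t j s : subst j s (lift 1 j t) = t.
Proof.
  revert j s; induction t as [n | a IHa b IHb | a IHa]; intros j s; simpl.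
  - destruct (Nat.ltb_spec n j); simpl.
    + destruct (Nat.eqb_spec n j); [lia |].
      destruct (Nat.ltb_spec j n); [lia | reflexivity].
    + destruct (Nat.eqb_spec (n + 1) j); [lia |].
      destruct (Nat.ltb_spec j (n + 1)); [f_equal; lia | lia].
  - rewrite IHa, IHb; reflexivity.
  - rewrite IHa; reflexivity.
Qed.

Lemma Kc_beta t a : beq (App (App Kc t) a) t.
Proof.
  eapply beq_trans; [apply beq_appl, beq_step, step_beta |].
  simpl. apply beq_step.
  rewrite <- (subst_lift t 0 a) at 2. apply step_beta.
Qed.

Lemma interp_RArr_Kc R R' g t1 t2 :
  interp (RArr R R') g (App Kc t1) (App Kc t2) <->
  (forall x x', interp R g x x' -> interp R' g t1 t2).
Proof.
  simpl. split; intros H x x' Hx.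
  - eapply interp_closed; [apply Kc_beta | apply Kc_beta | exact (H x x' Hx)].
  - eapply interp_closed;
      [apply beq_sym, Kc_beta | apply beq_sym, Kc_beta | exact (H x x' Hx)].
Qed.

Theorem mainTheorem18 :
  forall (R R' : rtype) (t1 t2 : term) (g : env),
    interp (RImp R R') g t1 t2 <->
    (forall x x' : term, interp R g x x' -> interp R' g t1 t2).
Proof.
  intros R R' t1 t2 g. unfold RImp.
  rewrite interp_RBul. apply interp_RArr_Kc.
Qed.
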